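(* Let $\tau\in\mathbb{Z}$ and let $\lambda=(\lambda_1,\dots,\lambda_{\ell})$ be an integer partition with $\ell=\ell(\lambda)\geq 3$ parts. For a partition $\nu=(\nu_1,\dots,\nu_\ell)$ of length $\ell$ set \[ K^\tau_{\nu}=(-1)^{|\nu|\tau}\,[\tau(\tau+1)]^{\ell-1}\prod_{i=1}^{\ell}\binom{\nu_i(\tau+1)-1}{\nu_i-1}\Big(\sum_{i=1}^{\ell}\nu_i\Big)^{\ell-3}, \] and define \[ n_{\lambda,0,\frac{|\lambda|}{2}}(\tau)=(-1)^{\ell}\sum_{d\mid\lambda}\mu(d)\,d^{\ell-1}K^\tau_{\lambda/d}. \] Then $n_{\lambda,0,\frac{|\lambda|}{2}}(\tau)\in\mathbb{Z}$.
   Context: $|\lambda|=\sum_i\lambda_i$; $\mu$ is the Möbius function; $d\mid\lambda$ means that the positive integer $d$ divides every part $\lambda_i$, and $\lambda/d$ is the partition $(\lambda_1/d,\dots,\lambda_\ell/d)$ (of the same length $\ell$). Binomial coefficients with negative top argument are defined by $\binom{n}{k}=(-1)^k\binom{-n+k-1}{k}$ for $n<0$, $k\geq 0$. ($K^\tau_{\nu}$ is the genus-zero open Gromov–Witten invariant $K^\tau_{\nu,0,|\nu|/2}$ of the resolved conifold with an Aganagic–Vafa brane in framing $\tau$.) *)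

From HB Require Import structures.
From mathcomp Require Import all_boot all_order all_algebra.
Set Implicit Arguments. Unset Strict Implicit. Unset Printing Implicit Defensive.
Import Order.TTheory GRing.Theory Num.Theory.
Local Open Scope ring_scope.

Definition is_partition (la : seq nat) : bool :=
  all (fun x => 0 < x)%N la && sorted geq la.

Definition psize (la : seq nat) : nat := sumn la.

(* Moebius function (mu 0 := 0, irrelevant). *)
Definition mobius (n : nat) : int :=
  if n == 0%N then 0
  else if all (fun p => logn p n == 1%N) (primes n)
       then (-1) ^+ size (primes n) else 0.

(* Binomial with integer top argument:
   binz n k = C(n,k) for n >= 0, and (-1)^k C(-n+k-1,k) for n < 0. *)
Definition binz (n : int) (k : nat) : int :=
  match n with
  | Posz m => ('C(m, k))%:Z
  | Negz m => (-1) ^+ k * ('C(m.+1 + k - 1, k))%:Z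
  end.

Definition dvd_part (d : nat) (la : seq nat) : bool := all (dvdn d) la.

Definition div_part (la : seq nat) (d : nat) : seq nat := map (fun x => x %/ d)%N la.

Definition Kdisk (tau : int) (nu : seq nat) : rat :=
  let l := size nu in
  (-1) ^ ((psize nu)%:Z * tau)
  * ((tau * (tau + 1))%:~R) ^ (l%:Z - 1)
  * \prod_(x <- nu) ((binz (x%:Z * (tau + 1) - 1) (x - 1)%N)%:~R)
  * ((psize nu)%:R) ^ (l%:Z - 3).

(* n_{la,0,|la|/2}(tau); d ranges over positive integers dividing all parts
   (all such d are <= |la| since parts are positive). *)
Definition n_disk (la : seq nat) (tau : int) : rat :=
  let l := size la in
  (-1) ^+ l *
  \sum_(1 <= d < (psize la).+1 | dvd_part d la)
     ((mobius d)%:~R * (d%:R) ^+ (l - 1) * Kdisk tau (div_part la d)).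

From HB Require Import structures.
From mathcomp Require Import all_boot all_order all_algebra.
Import Order.TTheory GRing.Theory Num.Theory.
Local Open Scope ring_scope.

(* For length at least 3 the exponents l - 1 and l - 3 in K^tau_nu are
   nonnegative, and (-1)^(|nu| tau) is a sign whatever the exponent, so
   K^tau_nu is a product of integers; hence so is every term of the Moebius
   sum. *)

Lemma rpredXz_ge0 (R : unitRingType) (S : mulrClosed R) (z : int) :
  0 <= z -> {in S, forall x, x ^ z \in S}.
Proof. by case: z => // n _ x Sx; rewrite -exprnP rpredX. Qed.

Lemma rpredN1Xz (R : unitRingType) (S : smulClosed R) (z : int) :
  (-1) ^ z \in S.
Proof.
case: z => n; first by rewrite -exprnP rpredX ?rpredN1.
by rewrite NegzE -exprz_inv invrN1 -exprnP rpredX ?rpredN1.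
Qed.

Lemma Kdisk_int (tau : int) (nu : seq nat) :
  (3 <= size nu)%N -> Kdisk tau nu \is a Num.int.
Proof.
move=> size_nu; rewrite /Kdisk.
have exp_ge0 k : (k <= 3)%N -> 0 <= (size nu)%:Z - k%:Z.
  by move=> le_k3; rewrite subr_ge0 lez_nat (leq_trans le_k3).
rewrite !rpredM ?rpredN1Xz ?rpredXz_ge0 ?exp_ge0 ?intr_int ?natr_int //.
by apply: rpred_prod => x _; apply: intr_int.
Qed.

Theorem theorem4p12 (tau : int) (la : seq nat) :
  is_partition la -> (3 <= size la)%N ->
  exists z : int, n_disk la tau = z%:~R.
Proof.
move=> _ size_la; apply/intrP; rewrite /n_disk.
rewrite rpredM ?rpredX ?rpredN1 //; apply: rpred_sum => d _.
apply: rpredM; last by rewrite Kdisk_int ?size_map.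
by rewrite rpredM ?intr_int ?rpredX ?natr_int.
Qed.
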